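(* In the setting described in the context: (1) If the model is DUR with constants $d,k$ and the parametrisation $(\tilde X,\Theta)$ is GTIP, then for all sufficiently small $\alpha>0$ there is $0<K<\infty$ such that $\mathbf E\{e^{\alpha|X|}\mid Y=y,\Theta=\theta\}\le e^{\alpha|\theta|}(1-\alpha d/2)+K$ for all $|\theta|>k$. (2) If the model is PUR with constants $d,k$ and the parametrisation $(X,\Theta)$ is GTIP, then for all sufficiently small $\alpha>0$ there is $0<K<\infty$ such that $\mathbf E\{e^{\alpha|y-\tilde X|}\mid Y=y,\Theta=\theta\}\le e^{\alpha|\theta|}(1-\alpha d/2)+K$ for all $|\theta|>k$.
   Context: Fix an observed value $y\in\mathbb R$. Consider the model $Y=X+Z_1$, $X=\Theta+Z_2$, where $Z_1,Z_2$ are independent real random variables, independent of $\Theta$, whose distributions are symmetric about $0$ and have continuous, bounded, everywhere positive Lebesgue densities $f_1,f_2$; $\Theta$ is given the improper flat (Lebesgue) prior on $\mathbb R$, and the posterior $\mathcal L(X,\Theta\mid Y=y)$ is proper. Write $\tilde X=X-\Theta$. A parametrisation $(U,\Theta)$, $U\in\{X,\tilde X\}$, is GTIP (geometrically tight in parameter) if there are constants $a,b>0$ not depending on $\theta$ such that $\mathbf P(|U|>x\mid Y=y,\Theta=\theta)\le ae^{-bx}$ for all $\theta\in\mathbb R$ and $x\ge0$. The model is DUR (data uniformly relevant) with constants $d,k>0$ if $|\mathbf E\{X\mid Y=y,\Theta=\theta\}|\le|\theta|-d$ for all $|\theta|>k$; it is PUR (parameter uniformly relevant) with constants $d,k>0$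 if $\operatorname{sgn}(\theta)\,\mathbf E\{X-y\mid Y=y,\Theta=\theta\}\ge d$ for all $|\theta|>k$. *)

From Stdlib Require Import Reals Lra.
Open Scope R_scope.

Definition improper_integral (f : R -> R) (l : R) : Prop :=
  (forall a b, inhabited (Riemann_integrable f a b)) /\
  forall eps, 0 < eps -> exists M, forall a b (pr : Riemann_integrable f a b),
    a <= - M -> M <= b -> Rabs (RiemannInt pr - l) < eps.

Definition sym_density (f : R -> R) : Prop :=
  (forall x, f (- x) = f x) /\
  continuity f /\
  (exists B, forall x, f x <= B) /\
  (forall x, 0 < f x) /\
  improper_integral f 1.

(* Unnormalised conditional density of X given Y = y, Theta = theta
   (flat prior on Theta):  x |-> f1 (y - x) * f2 (x - theta). *)
Definition cdens (f1 f2 : R -> R) (y theta : R) (x : R) : R :=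
  f1 (y - x) * f2 (x - theta).

(* cond_exp f1 f2 y g theta m :  E{ g(X) | Y = y, Theta = theta } exists and equals m. *)
Definition cond_exp (f1 f2 : R -> R) (y : R) (g : R -> R) (theta m : R) : Prop :=
  exists N D, improper_integral (cdens f1 f2 y theta) D /\
              improper_integral (fun x => g x * cdens f1 f2 y theta x) N /\
              m = N / D.

Definition ind_gt (t x : R) : R := if Rlt_dec x t then 1 else 0.

(* GTIP for a parametrisation (U, Theta) where U = Ufun theta X
   (Ufun theta x = x for U = X,  = x - theta for U = X~). *)
Definition GTIP (f1 f2 : R -> R) (y : R) (Ufun : R -> R -> R) : Prop :=
  exists a b, 0 < a /\ 0 < b /\
    forall theta x, 0 <= x ->
      exists p, cond_exp f1 f2 y (fun u => ind_gt (Rabs (Ufun theta u)) x) theta p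
                /\ p <= a * exp (- b * x).

Definition DUR (f1 f2 : R -> R) (y d k : R) : Prop :=
  forall theta, Rabs theta > k ->
    exists m, cond_exp f1 f2 y (fun x => x) theta m /\ Rabs m <= Rabs theta - d.

Definition sgn (t : R) : R := if Rlt_dec 0 t then 1 else if Rlt_dec t 0 then -1 else 0.

Definition PUR (f1 f2 : R -> R) (y d k : R) : Prop :=
  forall theta, Rabs theta > k ->
    exists m, cond_exp f1 f2 y (fun x => x - y) theta m /\ sgn theta * m >= d.

(* Fix theta with |theta| > k, put s = sgn theta, and let c(x) = f1(y-x) f2(x-theta)
   be the unnormalised conditional density of X, of total mass D.  Both parts of
   the theorem bound E{ exp(alpha |T + v(X)|) } with T = |theta| and a displacement
   v: in (1) v(x) = s(x - theta), so T + v = s x; in (2) v(x) = s(y - x), so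
   T + v = s(y - x~).  DUR resp. PUR says precisely E{v} <= -d, and GTIP of the
   relevant parametrisation bounds the tails of |v| uniformly in theta.

   A discretised layer-cake argument turns the
   exponential tail bound of GTIP into a uniform exponential moment
   (gtip_exp_moment).  The second-order bound
     e^{alpha|T+v|} <= e^{alpha T}(1 + alpha v + 64 alpha^2/beta^2 e^{beta|v|}) + e^{beta|v|}
   (drift_pointwise) integrated against c gives the one-step drift estimate
   (drift_bound); uniform_drift_bound chooses alpha and K uniformly in theta, and
   the theorem is the instance of it for the two displacements above. *)

From Stdlib Require Import Reals Lra FunctionalExtensionality Classical.
Open Scope R_scope.

Lemma exp_le_compat x y : x <= y -> exp x <= exp y.
Proof. intros [Hlt|<-]; [left; apply exp_increasing; exact Hlt | lra]. Qed.

Lemma exp_ge_1 x : 0 <= x -> 1 <= exp x.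
Proof. intros Hx; rewrite <- exp_0; apply exp_le_compat; exact Hx. Qed.

Lemma exp_opp_lt_1 x : 0 < x -> exp (- x) < 1.
Proof. intros Hx; rewrite <- exp_0; apply exp_increasing; lra. Qed.

Lemma exp_mult_INR r n : exp (r * INR n) = exp r ^ n.
Proof.
  induction n as [|n IH]; [simpl; rewrite Rmult_0_r; apply exp_0|].
  rewrite S_INR, Rmult_plus_distr_l, exp_plus, IH, Rmult_1_r; simpl; ring.
Qed.

Definition locally_integrable (g : R -> R) : Prop :=
  forall a b, inhabited (Riemann_integrable g a b).

Lemma continuity_locally_integrable g : continuity g -> locally_integrable g.
Proof.
  intros Hc a b; constructor.
  destruct (Rle_lt_dec a b) as [Hab|Hba].
  - apply continuity_implies_RiemannInt; auto.
  - apply RiemannInt_P1, continuity_implies_RiemannInt; auto; lra.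
Qed.

Lemma RiemannInt_nonneg g a b (pr : Riemann_integrable g a b) :
  a <= b -> (forall x, a < x < b -> 0 <= g x) -> 0 <= RiemannInt pr.
Proof.
  intros Hab Hg.
  assert (H := RiemannInt_P19 (RiemannInt_P14 a b 0) pr Hab Hg).
  rewrite RiemannInt_P15 in H; lra.
Qed.

Lemma RiemannInt_subinterval_le g a0 b0 a b
  (pr0 : Riemann_integrable g a0 b0) (pr : Riemann_integrable g a b) :
  locally_integrable g -> (forall x, 0 <= g x) ->
  a <= a0 -> a0 <= b0 -> b0 <= b -> RiemannInt pr0 <= RiemannInt pr.
Proof.
  intros Hg Hpos H1 H2 H3.
  destruct (Hg a a0) as [p1], (Hg b0 b) as [p2], (Hg a b0) as [p3].
  assert (E1 := RiemannInt_P26 p1 pr0 p3).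
  assert (E2 := RiemannInt_P26 p3 p2 pr).
  assert (0 <= RiemannInt p1) by (apply RiemannInt_nonneg; auto).
  assert (0 <= RiemannInt p2) by (apply RiemannInt_nonneg; auto).
  lra.
Qed.

Lemma RiemannInt_le_scaled f g a b K S
  (pf : Riemann_integrable f a b) (pg : Riemann_integrable g a b) :
  a <= b -> 0 <= K -> (forall x, g x <= K * f x) -> RiemannInt pf <= S ->
  RiemannInt pg <= K * S.
Proof.
  intros Hab HK Hgf Hf.
  pose (q := RiemannInt_P10 (K - 1) pf pf).
  assert (Eq := RiemannInt_P13 pf pf q).
  assert (RiemannInt pg <= RiemannInt q).
  { apply RiemannInt_P19; auto. intros x _. assert (H := Hgf x). lra. }
  assert (K * RiemannInt pf <= K * S) by (apply Rmult_le_compat_l; auto).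
  lra.
Qed.
Lemma improper_compact_le g L a b (pr : Riemann_integrable g a b) :
  improper_integral g L -> (forall x, 0 <= g x) -> a <= b -> RiemannInt pr <= L.
Proof.
  intros [Hg H] Hpos Hab.
  apply Rnot_lt_le; intro Hlt.
  destruct (H (RiemannInt pr - L)) as [M HM]; [lra|].
  set (M' := Rmax M (Rmax (Rabs a) (Rabs b))).
  assert (M <= M') by apply Rmax_l.
  assert (Rabs a <= M') by (unfold M'; eapply Rle_trans; [apply Rmax_l|apply Rmax_r]).
  assert (Rabs b <= M') by (unfold M'; eapply Rle_trans; [apply Rmax_r|apply Rmax_r]).
  destruct (Hg (- M') M') as [p].
  assert (Hp := HM (- M') M' p ltac:(lra) ltac:(lra)).
  assert (RiemannInt pr <= RiemannInt p)
    by (apply RiemannInt_subinterval_le; auto; split_Rabs; lra).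
  split_Rabs; lra.
Qed.

Lemma improper_unique g L1 L2 :
  improper_integral g L1 -> improper_integral g L2 -> L1 = L2.
Proof.
  intros [Hg H1] [_ H2].
  apply NNPP; intro Hne.
  assert (Heps : 0 < Rabs (L1 - L2) / 4)
    by (assert (0 < Rabs (L1 - L2)) by (apply Rabs_pos_lt; lra); lra).
  destruct (H1 _ Heps) as [M1 HM1], (H2 _ Heps) as [M2 HM2].
  set (M := Rmax M1 M2).
  assert (M1 <= M) by apply Rmax_l. assert (M2 <= M) by apply Rmax_r.
  destruct (Hg (- M) M) as [p].
  assert (A1 := HM1 (- M) M p ltac:(lra) ltac:(lra)).
  assert (A2 := HM2 (- M) M p ltac:(lra) ltac:(lra)).
  revert A1 A2 Heps; split_Rabs; lra.
Qed.

Lemma improper_mono g h Lg Lh :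
  improper_integral g Lg -> improper_integral h Lh -> (forall x, g x <= h x) -> Lg <= Lh.
Proof.
  intros [Hg H1] [Hh H2] Hgh.
  apply Rnot_lt_le; intro Hlt.
  assert (Heps : 0 < (Lg - Lh) / 4) by lra.
  destruct (H1 _ Heps) as [M1 HM1], (H2 _ Heps) as [M2 HM2].
  set (M := Rmax (Rmax M1 M2) 0).
  assert (M1 <= M) by (unfold M; eapply Rle_trans; [apply Rmax_l|apply Rmax_l]).
  assert (M2 <= M) by (unfold M; eapply Rle_trans; [apply Rmax_r|apply Rmax_l]).
  assert (0 <= M) by apply Rmax_r.
  destruct (Hg (- M) M) as [p1], (Hh (- M) M) as [p2].
  assert (A1 := HM1 (- M) M p1 ltac:(lra) ltac:(lra)).
  assert (A2 := HM2 (- M) M p2 ltac:(lra) ltac:(lra)).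
  assert (RiemannInt p1 <= RiemannInt p2) by (apply RiemannInt_P19; auto; lra).
  revert A1 A2; split_Rabs; lra.
Qed.

Lemma improper_lin f g Lf Lg p :
  improper_integral f Lf -> improper_integral g Lg ->
  improper_integral (fun x => f x + p * g x) (Lf + p * Lg).
Proof.
  intros [Hf H1] [Hg H2]; split.
  - intros a b; destruct (Hf a b) as [p1], (Hg a b) as [p2].
    constructor; apply RiemannInt_P10; auto.
  - intros eps Heps.
    assert (Hp : 0 <= Rabs p) by apply Rabs_pos.
    set (e := eps / (2 * (Rabs p + 1))).
    assert (He : 0 < e) by (unfold e; apply Rdiv_lt_0_compat; lra).
    assert (Hee : e * (2 * (Rabs p + 1)) = eps) by (unfold e; field; lra).
    destruct (H1 _ He) as [M1 HM1], (H2 _ He) as [M2 HM2].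
    exists (Rmax M1 M2); intros a b pr Ha Hb.
    assert (M1 <= Rmax M1 M2) by apply Rmax_l.
    assert (M2 <= Rmax M1 M2) by apply Rmax_r.
    destruct (Hf a b) as [p1], (Hg a b) as [p2].
    rewrite (RiemannInt_P13 p1 p2 pr).
    assert (A1 := HM1 a b p1 ltac:(lra) ltac:(lra)).
    assert (A2 := HM2 a b p2 ltac:(lra) ltac:(lra)).
    replace (RiemannInt p1 + p * RiemannInt p2 - (Lf + p * Lg))
      with ((RiemannInt p1 - Lf) + p * (RiemannInt p2 - Lg)) by ring.
    eapply Rle_lt_trans; [apply Rabs_triang|]; rewrite Rabs_mult.
    assert (Rabs p * Rabs (RiemannInt p2 - Lg) <= Rabs p * e)
      by (apply Rmult_le_compat_l; lra).
    nra.
Qed.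

Lemma improper_ext f g L :
  (forall x, f x = g x) -> improper_integral f L -> improper_integral g L.
Proof.
  intros H; replace g with f; [auto|]; apply functional_extensionality; exact H.
Qed.

Lemma improper_scal f L p :
  improper_integral f L -> improper_integral (fun x => p * f x) (p * L).
Proof.
  intros Hf.
  apply (improper_ext (fun x => f x + (p - 1) * f x)); [intro; ring|].
  replace (p * L) with (L + (p - 1) * L) by ring.
  apply improper_lin; exact Hf.
Qed.

(* By completeness of R, a nonnegative locally integrable function whose compact
   integrals are bounded by S has an improper integral, at most S. *)
Lemma improper_of_bounded g S :
  locally_integrable g -> (forall x, 0 <= g x) ->
  (forall a b (pr : Riemann_integrable g a b), a <= b -> RiemannInt pr <= S) ->
  exists L, improper_integral g L /\ L <= S.
Proof.
  intros Hg Hpos HS.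
  set (E := fun r => exists a b (pr : Riemann_integrable g a b), a <= b /\ r = RiemannInt pr).
  assert (HEb : bound E) by (exists S; intros r [a [b [pr [Hab ->]]]]; auto).
  assert (HE : exists r, E r).
  { destruct (Hg 0 0) as [p]. exists (RiemannInt p), 0, 0, p. split; [lra|reflexivity]. }
  destruct (completeness E HEb HE) as [L [HLub HLleast]].
  exists L; split; [split; [exact Hg|]|].
  - intros eps Heps.
    destruct (classic (exists r, E r /\ L - eps < r))
      as [[r [[a0 [b0 [p0 [Hab0 ->]]]] Hr]] | Hnone].
    + exists (Rmax (Rabs a0) (Rabs b0)); intros a b pr Ha Hb.
      assert (Rabs a0 <= Rmax (Rabs a0) (Rabs b0)) by apply Rmax_l.
      assert (Rabs b0 <= Rmax (Rabs a0) (Rabs b0)) by apply Rmax_r.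
      assert (RiemannInt p0 <= RiemannInt pr)
        by (apply RiemannInt_subinterval_le; auto; split_Rabs; lra).
      assert (RiemannInt pr <= L)
        by (apply HLub; exists a, b, pr; split; [split_Rabs; lra|reflexivity]).
      split_Rabs; lra.
    + exfalso; assert (L <= L - eps); [|lra].
      apply HLleast; intros r Hr; apply Rnot_lt_le; intro; apply Hnone; eauto.
  - apply HLleast; intros r [a [b [pr [Hab ->]]]]; apply HS; exact Hab.
Qed.

Lemma improper_dominated f g L K :
  continuity f -> (forall x, 0 <= f x) -> 0 <= K -> (forall x, f x <= K * g x) ->
  (forall x, 0 <= g x) -> improper_integral g L ->
  exists F, improper_integral f F /\ F <= K * L.
Proof.
  intros Cf Hf HK Hfg Hg HL.
  apply improper_of_bounded; [apply continuity_locally_integrable; exact Cf | exact Hf |].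
  intros a b pr Hab; destruct (proj1 HL a b) as [pg].
  apply (RiemannInt_le_scaled g f a b K L pg pr Hab HK Hfg).
  apply (improper_compact_le _ _ _ _ pg HL Hg Hab).
Qed.

Lemma improper_pos c D :
  continuity c -> (forall x, 0 < c x) -> improper_integral c D -> 0 < D.
Proof.
  intros Cc Hpos HD.
  destruct (continuity_ab_min c 0 1 ltac:(lra) (fun x _ => Cc x)) as [x0 [Hx0 _]].
  destruct (proj1 HD 0 1) as [p].
  assert (H := RiemannInt_P19 (RiemannInt_P14 0 1 (c x0)) p ltac:(lra)
                 ltac:(intros x Hx; apply Hx0; lra)).
  rewrite RiemannInt_P15 in H.
  assert (RiemannInt p <= D)
    by (apply (improper_compact_le _ _ _ _ p HD); [intro; left; auto | lra]).
  assert (Hc0 := Hpos x0); lra.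
Qed.
Lemma cdens_continuity f1 f2 y th :
  sym_density f1 -> sym_density f2 -> continuity (cdens f1 f2 y th).
Proof.
  intros [_ [C1 _]] [_ [C2 _]].
  assert (A1 : continuity (fun x => y - x)) by (intro x; reg).
  assert (A2 : continuity (fun x => x - th)) by (intro x; reg).
  exact (continuity_mult _ _ (continuity_comp _ _ A1 C1) (continuity_comp _ _ A2 C2)).
Qed.

Lemma cdens_pos f1 f2 y th x :
  sym_density f1 -> sym_density f2 -> 0 < cdens f1 f2 y th x.
Proof.
  intros [_ [_ [_ [P1 _]]]] [_ [_ [_ [P2 _]]]].
  unfold cdens; apply Rmult_lt_0_compat; auto.
Qed.

Lemma cdens_mass_pos f1 f2 y th D :
  sym_density f1 -> sym_density f2 -> improper_integral (cdens f1 f2 y th) D -> 0 < D.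
Proof.
  intros h1 h2; apply improper_pos;
    [apply cdens_continuity | intro; apply cdens_pos]; auto.
Qed.

Lemma cond_exp_affine f1 f2 y g h p q th m :
  sym_density f1 -> sym_density f2 -> (forall x, h x = p * g x + q) ->
  cond_exp f1 f2 y g th m -> cond_exp f1 f2 y h th (p * m + q).
Proof.
  intros h1 h2 Hh [N [D [HD [HN ->]]]].
  assert (HD0 := cdens_mass_pos f1 f2 y th D h1 h2 HD).
  exists (q * D + p * N), D; split; [exact HD|]; split.
  - apply (improper_ext (fun x => q * cdens f1 f2 y th x + p * (g x * cdens f1 f2 y th x)));
      [intro x; rewrite Hh; ring|].
    apply improper_lin; [apply improper_scal|]; assumption.
  - field; lra.
Qed.

Lemma exp_second_order z : exp z <= 1 + z + 4 * z ^ 2 * exp (Rabs z).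
Proof.
  assert (He : 1 <= exp (Rabs z)) by (apply exp_ge_1, Rabs_pos).
  assert (Hp := exp_pos z).
  destruct (Rle_or_lt z (1/2)) as [Hz|Hz].
  - assert (H1 := exp_ineq1_le (- z)).
    assert (Hm : exp z * exp (- z) = 1)
      by (rewrite <- exp_plus; replace (z + - z) with 0 by ring; apply exp_0).
    assert (exp z <= 1 + z + 2 * z ^ 2).
    { assert (exp z * (1 - z) <= 1) by nra.
      assert (0 <= z ^ 2 * (1 - 2 * z)) by (apply Rmult_le_pos; nra).
      apply (Rmult_le_reg_r (1 - z)); nra. }
    nra.
  - rewrite Rabs_right by lra.
    assert (exp z * 1 <= exp z * (4 * z ^ 2)) by (apply Rmult_le_compat_l; nra).
    lra.
Qed.

Lemma sq_le_exp w : 0 <= w -> w ^ 2 <= 4 * exp w.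
Proof.
  intros Hw; assert (H := exp_ineq1_le (w / 2)).
  replace w with (w / 2 + w / 2) at 2 by field; rewrite exp_plus; nra.
Qed.

Lemma quadratic_remainder_le v alpha beta :
  0 < alpha -> 0 < beta -> alpha <= beta / 2 ->
  4 * (alpha * v) ^ 2 * exp (Rabs (alpha * v)) <= 64 / beta ^ 2 * alpha ^ 2 * exp (beta * Rabs v).
Proof.
  intros Ha Hb Hab.
  assert (Hv : 0 <= Rabs v) by apply Rabs_pos.
  assert (Hsq : v ^ 2 <= 16 / beta ^ 2 * exp (beta * Rabs v / 2)).
  { assert (H := sq_le_exp (beta * Rabs v / 2) ltac:(nra)).
    rewrite <- pow2_abs.
    apply (Rmult_le_reg_l (beta ^ 2)); [nra|].
    replace (beta ^ 2 * (16 / beta ^ 2 * exp (beta * Rabs v / 2)))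
      with (16 * exp (beta * Rabs v / 2)) by (field; lra).
    nra. }
  assert (Hexp : exp (beta * Rabs v / 2) * exp (alpha * Rabs v) <= exp (beta * Rabs v))
    by (rewrite <- exp_plus; apply exp_le_compat; nra).
  assert (Hea := exp_pos (alpha * Rabs v)).
  assert (Hk : 0 <= 64 / beta ^ 2 * alpha ^ 2)
    by (apply Rmult_le_pos; [apply Rlt_le, Rdiv_lt_0_compat; nra | nra]).
  rewrite Rabs_mult, (Rabs_right alpha) by lra.
  replace ((alpha * v) ^ 2) with (alpha ^ 2 * v ^ 2) by ring.
  assert (4 * (alpha ^ 2 * v ^ 2) * exp (alpha * Rabs v)
          <= 64 / beta ^ 2 * alpha ^ 2 * (exp (beta * Rabs v / 2) * exp (alpha * Rabs v))).
  { replace (64 / beta ^ 2 * alpha ^ 2 * (exp (beta * Rabs v / 2) * exp (alpha * Rabs v)))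
      with (4 * alpha ^ 2 * (16 / beta ^ 2 * exp (beta * Rabs v / 2)) * exp (alpha * Rabs v))
      by (field; lra).
    apply Rmult_le_compat_r; [lra|]. nra. }
  nra.
Qed.

(* The pointwise drift inequality: for T + v >= 0 it is the Taylor bound scaled
   by e^{alpha T}; for T + v < 0 one has alpha |T + v| <= beta |v|. *)
Lemma drift_pointwise T v alpha beta :
  0 <= T -> 0 < alpha -> 0 < beta -> alpha <= beta / 2 ->
  exp (alpha * Rabs (T + v)) <=
  exp (alpha * T) * (1 + alpha * v + 64 / beta ^ 2 * alpha ^ 2 * exp (beta * Rabs v))
  + exp (beta * Rabs v).
Proof.
  intros HT Ha Hb Hab.
  assert (Hquad : exp (alpha * v) <= 1 + alpha * v + 64 / beta ^ 2 * alpha ^ 2 * exp (beta * Rabs v))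
    by (assert (H1 := exp_second_order (alpha * v));
        assert (H2 := quadratic_remainder_le v alpha beta Ha Hb Hab); lra).
  assert (HeT := exp_pos (alpha * T)).
  assert (Hebv := exp_pos (beta * Rabs v)).
  assert (Hpos := exp_pos (alpha * v)).
  destruct (Rle_or_lt 0 (T + v)).
  - rewrite Rabs_right, Rmult_plus_distr_l, exp_plus by lra.
    assert (exp (alpha * T) * exp (alpha * v) <=
            exp (alpha * T) * (1 + alpha * v + 64 / beta ^ 2 * alpha ^ 2 * exp (beta * Rabs v)))
      by (apply Rmult_le_compat_l; lra).
    lra.
  - rewrite Rabs_left by lra.
    assert (exp (alpha * - (T + v)) <= exp (beta * Rabs v))
      by (apply exp_le_compat; assert (- (T + v) <= Rabs v) by (split_Rabs; lra); nra).
    assert (0 <= exp (alpha * T) * (1 + alpha * v + 64 / beta ^ 2 * alpha ^ 2 * exp (beta * Rabs v)))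
      by (apply Rmult_le_pos; lra).
    lra.
Qed.
Lemma ind_gt_bounds t x : 0 <= ind_gt t x <= 1.
Proof. unfold ind_gt; destruct (Rlt_dec x t); lra. Qed.

(* Terms of the discretised layer-cake majorant of exp(beta w0):
   1 for n = 0 and e^{beta (m+1)} 1{w0 > m} for n = m + 1. *)
Definition layer_term (beta w0 : R) (n : nat) : R :=
  match n with
  | O => 1
  | S m => exp (beta * (INR m + 1)) * ind_gt w0 (INR m)
  end.

Lemma layer_term_nonneg beta w0 n : 0 <= layer_term beta w0 n.
Proof.
  destruct n as [|m]; cbn [layer_term]; [lra|].
  apply Rmult_le_pos; [left; apply exp_pos | apply ind_gt_bounds].
Qed.

Lemma exp_le_layer_sum beta w0 N :
  0 <= beta -> 0 <= w0 -> w0 <= INR N + 1 ->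
  exp (beta * w0) <= sum_f_R0 (layer_term beta w0) (S N).
Proof.
  intros Hb Hw; induction N as [|N IH]; intros HN.
  - cbn [sum_f_R0 layer_term]; simpl INR in *; unfold ind_gt.
    destruct (Rlt_dec 0 w0).
    + assert (exp (beta * w0) <= exp (beta * (0 + 1))) by (apply exp_le_compat; nra).
      lra.
    + replace w0 with 0 by lra; rewrite Rmult_0_r, exp_0; lra.
  - change (sum_f_R0 (layer_term beta w0) (S (S N)))
      with (sum_f_R0 (layer_term beta w0) (S N) + layer_term beta w0 (S (S N))).
    assert (Hlast := layer_term_nonneg beta w0 (S (S N))).
    destruct (Rle_or_lt w0 (INR N + 1)) as [Hle|Hgt]; [specialize (IH Hle); lra|].
    assert (0 <= sum_f_R0 (layer_term beta w0) (S N))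
      by (apply cond_pos_sum; intro; apply layer_term_nonneg).
    cbn [layer_term]; rewrite S_INR in *; unfold ind_gt.
    destruct (Rlt_dec (INR N + 1) w0); [|lra].
    assert (exp (beta * w0) <= exp (beta * (INR N + 1 + 1))) by (apply exp_le_compat; nra).
    lra.
Qed.

(* Bound on the integral of the n-th layer term against c, given the tail bound
   A e^{-2 beta m} D for the mass of {w > m}. *)
Definition layer_mass (A D beta : R) (n : nat) : R :=
  match n with
  | O => D
  | S m => exp (beta * (INR m + 1)) * (A * exp (- (2 * beta) * INR m) * D)
  end.

Lemma layer_mass_sum_le A D beta N :
  0 < A -> 0 <= D -> 0 < beta ->
  sum_f_R0 (layer_mass A D beta) (S N) <= (1 + A * exp beta / (1 - exp (- beta))) * D.
Proof.
  intros HA HD Hb.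
  set (q := exp (- beta)).
  assert (Hq : q < 1) by (apply exp_opp_lt_1; exact Hb).
  assert (Hq0 : 0 < q) by apply exp_pos.
  assert (HK : 0 <= A * exp beta * D)
    by (apply Rmult_le_pos; [apply Rlt_le, Rmult_lt_0_compat; [exact HA | apply exp_pos] | exact HD]).
  rewrite decomp_sum by apply Nat.lt_0_succ; cbn [Nat.pred layer_mass].
  rewrite (sum_eq _ (fun i => q ^ i * (A * exp beta * D))).
  2:{ intros i _. unfold q; rewrite <- exp_mult_INR.
      assert (Hkey : exp (beta * (INR i + 1)) * exp (- (2 * beta) * INR i)
                     = exp beta * exp (- beta * INR i))
        by (rewrite <- !exp_plus; f_equal; ring).
      transitivity (A * D * (exp (beta * (INR i + 1)) * exp (- (2 * beta) * INR i))); [ring|].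
      rewrite Hkey; ring. }
  rewrite <- scal_sum, tech3 by lra.
  assert (0 < q ^ S N) by (apply pow_lt; lra).
  assert (A * exp beta * D * ((1 - q ^ S N) / (1 - q)) <= A * exp beta * D / (1 - q)).
  { unfold Rdiv; rewrite <- Rmult_assoc; apply Rmult_le_compat_r;
      [apply Rlt_le, Rinv_0_lt_compat; lra | nra]. }
  replace ((1 + A * exp beta / (1 - q)) * D) with (D + A * exp beta * D / (1 - q)) by (field; lra).
  lra.
Qed.

Lemma RiemannInt_sum_le (g : nat -> R -> R) (B : nat -> R) a b :
  a <= b -> (forall n x, 0 <= g n x) ->
  (forall n, exists L, improper_integral (g n) L /\ L <= B n) ->
  forall N, exists pr : Riemann_integrable (fun x => sum_f_R0 (fun n => g n x) N) a b,
    RiemannInt pr <= sum_f_R0 B N.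
Proof.
  intros Hab Hg HB N.
  induction N as [|N [p0 Hp0]].
  - destruct (HB 0%nat) as [L [HL HLB]], (proj1 HL a b) as [p].
    exists p.
    exact (Rle_trans _ _ _ (improper_compact_le _ _ _ _ p HL (Hg 0%nat) Hab) HLB).
  - destruct (HB (S N)) as [L [HL HLB]], (proj1 HL a b) as [p1].
    assert (Hp1 : RiemannInt p1 <= L)
      by exact (improper_compact_le _ _ _ _ p1 HL (Hg (S N)) Hab).
    pose (q := RiemannInt_P10 1 p0 p1).
    assert (Eq := RiemannInt_P13 p0 p1 q).
    assert (Hsum : forall x, Rmin a b <= x <= Rmax a b ->
              sum_f_R0 (fun n => g n x) N + 1 * g (S N) x = sum_f_R0 (fun n => g n x) (S N))
      by (intros; cbn [sum_f_R0]; ring).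
    assert (Hin : forall x, a < x < b -> Rmin a b <= x <= Rmax a b)
      by (intros; rewrite Rmin_left, Rmax_right; lra).
    exists (Riemann_integrable_ext _ Hsum q).
    rewrite <- (RiemannInt_P18 q _ Hab (fun x Hx => Hsum x (Hin x Hx))).
    cbn [sum_f_R0]; lra.
Qed.
Lemma exp_moment_from_tails (c w : R -> R) D A beta :
  (forall x, 0 <= c x) -> improper_integral c D -> 0 < A -> 0 < beta ->
  continuity w -> (forall x, 0 <= w x) ->
  (forall n : nat, exists L, improper_integral (fun x => ind_gt (w x) (INR n) * c x) L /\
                              L <= A * exp (- (2 * beta) * INR n) * D) ->
  forall a b (pr : Riemann_integrable (fun x => exp (beta * w x) * c x) a b),
    a <= b -> RiemannInt pr <= (1 + A * exp beta / (1 - exp (- beta))) * D.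
Proof.
  intros Hc HD HA Hb Cw Hw Htail a b pr Hab.
  assert (HD0 : 0 <= D).
  { destruct (proj1 HD 0 0) as [p].
    apply (Rle_trans _ (RiemannInt p)); [apply RiemannInt_nonneg; intros; lra|].
    apply (improper_compact_le _ _ _ _ p HD Hc); lra. }
  destruct (continuity_ab_maj w a b Hab (fun x _ => Cw x)) as [xm [Hxm _]].
  destruct (INR_unbounded (w xm)) as [N HN].
  destruct (RiemannInt_sum_le (fun n x => layer_term beta (w x) n * c x)
              (layer_mass A D beta) a b Hab) with (N := S N) as [p Hp].
  - intros n x; apply Rmult_le_pos; [apply layer_term_nonneg | apply Hc].
  - intros [|m]; cbn [layer_term layer_mass].
    + exists D; split; [apply (improper_ext c); [intro; ring | exact HD] | lra].
    + destruct (Htail m) as [L [HL HLb]].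
      exists (exp (beta * (INR m + 1)) * L); split.
      * apply (improper_ext (fun x => exp (beta * (INR m + 1)) * (ind_gt (w x) (INR m) * c x)));
          [intro; ring | apply improper_scal; exact HL].
      * apply Rmult_le_compat_l; [left; apply exp_pos | exact HLb].
  - assert (RiemannInt pr <= RiemannInt p).
    { apply RiemannInt_P19; [exact Hab|]; intros x Hx.
      rewrite <- scal_sum, (Rmult_comm (c x)).
      apply Rmult_le_compat_r; [apply Hc|].
      apply exp_le_layer_sum; [lra | apply Hw |].
      assert (w x <= w xm) by (apply Hxm; lra). lra. }
    assert (Hsum := layer_mass_sum_le A D beta N HA HD0 Hb).
    lra.
Qed.

Lemma continuity_exp_abs r u :
  continuity u -> continuity (fun x => exp (r * Rabs (u x))).
Proof.
  intros Cu.
  apply (continuity_comp (fun x => r * Rabs (u x)) exp);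
    [apply continuity_scal, (continuity_comp _ _ Cu Rcontinuity_abs) |
     exact (derivable_continuous _ derivable_exp)].
Qed.

Lemma gtip_exp_moment f1 f2 y (Uf : R -> R -> R) th D a b :
  sym_density f1 -> sym_density f2 -> continuity (Uf th) ->
  improper_integral (cdens f1 f2 y th) D -> 0 < a -> 0 < b ->
  (forall t, 0 <= t -> exists p,
      cond_exp f1 f2 y (fun u => ind_gt (Rabs (Uf th u)) t) th p /\ p <= a * exp (- b * t)) ->
  exists E, improper_integral (fun x => exp (b / 2 * Rabs (Uf th x)) * cdens f1 f2 y th x) E /\
            E <= (1 + a * exp (b / 2) / (1 - exp (- (b / 2)))) * D.
Proof.
  intros h1 h2 CU HD Ha Hb Htail.
  assert (Cc := cdens_continuity f1 f2 y th h1 h2).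
  apply improper_of_bounded.
  - apply continuity_locally_integrable, continuity_mult; [apply continuity_exp_abs|]; assumption.
  - intro x; apply Rmult_le_pos; [left; apply exp_pos | left; apply cdens_pos; auto].
  - apply (exp_moment_from_tails _ (fun x => Rabs (Uf th x))); auto;
      [| lra | exact (continuity_comp _ _ CU Rcontinuity_abs) | intro; apply Rabs_pos |].
    + intro x; left; apply cdens_pos; auto.
    + intro n; destruct (Htail (INR n) (pos_INR n)) as [p [[N [D' [HD' [HN ->]]]] Hpb]].
      rewrite <- (improper_unique _ _ _ HD HD') in Hpb.
      assert (HD0 := cdens_mass_pos f1 f2 y th D h1 h2 HD).
      exists N; split; [exact HN|].
      replace (- (2 * (b / 2)) * INR n) with (- b * INR n) by field.
      apply (Rmult_le_compat_r D) in Hpb; [|lra].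
      replace (N / D * D) with N in Hpb by (field; lra).
      exact Hpb.
Qed.
Lemma displacement_exp_moment f1 f2 y (Uf : R -> R -> R) (u : R -> R) th D a b M :
  sym_density f1 -> sym_density f2 -> continuity (Uf th) -> continuity u ->
  (forall x, Rabs (u x) <= Rabs (Uf th x) + M) ->
  improper_integral (cdens f1 f2 y th) D -> 0 < a -> 0 < b ->
  (forall t, 0 <= t -> exists p,
      cond_exp f1 f2 y (fun z => ind_gt (Rabs (Uf th z)) t) th p /\ p <= a * exp (- b * t)) ->
  exists E, improper_integral (fun x => exp (b / 2 * Rabs (u x)) * cdens f1 f2 y th x) E /\
            E <= exp (b / 2 * M) * (1 + a * exp (b / 2) / (1 - exp (- (b / 2)))) * D.
Proof.
  intros h1 h2 CU Cu Hub HD Ha Hb Htail.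
  assert (Hc : forall x, 0 <= cdens f1 f2 y th x) by (intro; left; apply cdens_pos; auto).
  destruct (gtip_exp_moment f1 f2 y Uf th D a b h1 h2 CU HD Ha Hb Htail) as [E1 [HE1 HE1b]].
  destruct (improper_dominated (fun x => exp (b / 2 * Rabs (u x)) * cdens f1 f2 y th x)
              (fun x => exp (b / 2 * Rabs (Uf th x)) * cdens f1 f2 y th x) E1 (exp (b / 2 * M)))
    as [E [HE HEb]];
    [apply continuity_mult; [apply continuity_exp_abs | apply cdens_continuity]; assumption
    | intro; apply Rmult_le_pos; [left; apply exp_pos | apply Hc]
    | left; apply exp_pos | | intro; apply Rmult_le_pos; [left; apply exp_pos | apply Hc]
    | exact HE1 |].
  - intro x; rewrite <- Rmult_assoc, <- exp_plus.
    apply Rmult_le_compat_r; [apply Hc | apply exp_le_compat].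
    assert (Hx := Hub x); nra.
  - exists E; split; [exact HE|].
    apply (Rle_trans _ _ _ HEb); rewrite Rmult_assoc.
    apply Rmult_le_compat_l; [left; apply exp_pos | exact HE1b].
Qed.

(* One-step drift: if E{v} <= -d and E{e^{beta|v|}} <= C, then for alpha small
   E{e^{alpha|T+v|}} <= e^{alpha T}(1 - alpha d/2) + C; integrates drift_pointwise. *)
Lemma drift_bound (c v : R -> R) (D V E T alpha beta C d : R) :
  continuity c -> continuity v -> (forall x, 0 <= c x) -> 0 < D -> improper_integral c D ->
  improper_integral (fun x => v x * c x) V -> V <= - d * D ->
  improper_integral (fun x => exp (beta * Rabs (v x)) * c x) E -> E <= C * D ->
  0 <= T -> 0 < alpha -> 0 < beta -> alpha <= beta / 2 -> 0 < C ->
  alpha * (64 / beta ^ 2 * C) <= d / 2 ->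
  exists G, improper_integral (fun x => exp (alpha * Rabs (T + v x)) * c x) G /\
            G / D <= exp (alpha * T) * (1 - alpha * d / 2) + C.
Proof.
  intros Cc Cv Hc HD0 HD HV HVd HE HEb HT Ha Hb Hab HC Had.
  set (e := exp (alpha * T)) in *.
  assert (He1 : 1 <= e) by (apply exp_ge_1; nra).
  set (kap := 64 / beta ^ 2) in *.
  assert (Hkap : 0 < kap) by (apply Rdiv_lt_0_compat; nra).
  assert (Hnonneg : forall r x, 0 <= exp r * c x)
    by (intros; apply Rmult_le_pos; [left; apply exp_pos | apply Hc]).
  destruct (improper_dominated (fun x => exp (alpha * Rabs (T + v x)) * c x)
              (fun x => exp (beta * Rabs (v x)) * c x) E e) as [G [HG _]];
    [| intro; apply Hnonneg | lra | | intro; apply Hnonneg | exact HE |].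
  - apply continuity_mult; [apply continuity_exp_abs | exact Cc].
    apply continuity_plus; [apply continuity_const; intros ? ?; reflexivity | exact Cv].
  - intro x; unfold e; rewrite <- Rmult_assoc, <- exp_plus.
    apply Rmult_le_compat_r; [apply Hc | apply exp_le_compat].
    assert (Rabs (T + v x) <= T + Rabs (v x)) by (split_Rabs; lra).
    assert (0 <= Rabs (v x)) by apply Rabs_pos.
    nra.
  - exists G; split; [exact HG|].
    assert (HGle : G <= e * D + alpha * e * V + (e * kap * alpha ^ 2 + 1) * E).
    { apply (improper_mono _ _ _ _ HG
               (improper_lin _ _ _ _ (e * kap * alpha ^ 2 + 1)
                  (improper_lin _ _ _ _ (alpha * e) (improper_scal _ _ e HD) HV) HE)).
      intro x; cbv beta.
      assert (P := drift_pointwise T (v x) alpha beta HT Ha Hb Hab); fold e kap in P.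
      eapply Rle_trans; [exact (Rmult_le_compat_r (c x) _ _ (Hc x) P)|].
      right; ring. }
    assert (Hq : 0 <= e * kap * alpha ^ 2)
      by (apply Rmult_le_pos; [apply Rmult_le_pos | apply pow2_ge_0]; lra).
    assert (alpha * e * V <= alpha * e * (- d * D)) by (apply Rmult_le_compat_l; nra).
    assert ((e * kap * alpha ^ 2 + 1) * E <= (e * kap * alpha ^ 2 + 1) * (C * D))
      by (apply Rmult_le_compat_l; lra).
    assert (kap * alpha ^ 2 * C <= alpha * d / 2)
      by (replace (kap * alpha ^ 2 * C) with (alpha * (alpha * (kap * C))) by ring;
          apply (Rle_trans _ (alpha * (d / 2))); [apply Rmult_le_compat_l|]; lra).
    assert (e * D * (kap * alpha ^ 2 * C) <= e * D * (alpha * d / 2))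
      by (apply Rmult_le_compat_l; nra).
    apply (Rmult_le_reg_r D); [exact HD0|].
    replace (G / D * D) with G by (field; lra).
    nra.
Qed.

Lemma small_alpha beta C d :
  0 < beta -> 0 < C -> 0 < d ->
  exists alpha0, 0 < alpha0 /\ forall alpha, 0 < alpha -> alpha < alpha0 ->
    alpha <= beta / 2 /\ alpha * (64 / beta ^ 2 * C) <= d / 2.
Proof.
  intros Hb HC Hd.
  exists (Rmin (beta / 2) (d * beta ^ 2 / (128 * C))); split.
  - apply Rmin_glb_lt; [lra|].
    apply Rdiv_lt_0_compat; [apply Rmult_lt_0_compat; [lra | apply pow_lt; lra] | lra].
  - intros alpha Ha Hlt.
    assert (H1 : alpha < beta / 2) by (eapply Rlt_le_trans; [exact Hlt | apply Rmin_l]).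
    assert (H2 : alpha < d * beta ^ 2 / (128 * C))
      by (eapply Rlt_le_trans; [exact Hlt | apply Rmin_r]).
    split; [lra|].
    apply (Rmult_lt_compat_r (128 * C)) in H2; [|lra].
    replace (d * beta ^ 2 / (128 * C) * (128 * C)) with (d * beta ^ 2) in H2 by (field; lra).
    replace (alpha * (64 / beta ^ 2 * C)) with (alpha * (128 * C) / (2 * beta ^ 2)) by (field; lra).
    apply (Rmult_le_reg_r (2 * beta ^ 2)); [nra|].
    replace (alpha * (128 * C) / (2 * beta ^ 2) * (2 * beta ^ 2)) with (alpha * (128 * C))
      by (field; lra).
    lra.
Qed.
Lemma uniform_drift_bound f1 f2 y (Uf v : R -> R -> R) (g : R -> R -> R -> R) d k M :
  sym_density f1 -> sym_density f2 -> GTIP f1 f2 y Uf -> 0 < d -> 0 <= M ->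
  (forall th, continuity (Uf th)) ->
  (forall th, Rabs th > k ->
     continuity (v th) /\ (forall x, Rabs (v th x) <= Rabs (Uf th x) + M) /\
     (exists m, cond_exp f1 f2 y (v th) th m /\ m <= - d) /\
     (forall alpha x, g alpha th x = exp (alpha * Rabs (Rabs th + v th x)))) ->
  exists alpha0, 0 < alpha0 /\
    forall alpha, 0 < alpha -> alpha < alpha0 ->
      exists K, 0 < K /\
        forall th, Rabs th > k ->
          exists m, cond_exp f1 f2 y (g alpha th) th m /\
                    m <= exp (alpha * Rabs th) * (1 - alpha * d / 2) + K.
Proof.
  intros h1 h2 [a [b [Ha [Hb Htail]]]] Hd HM CU Hth.
  set (C1 := 1 + a * exp (b / 2) / (1 - exp (- (b / 2)))).
  assert (HC1 : 0 < C1).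
  { assert (exp (- (b / 2)) < 1) by (apply exp_opp_lt_1; lra).
    assert (0 < a * exp (b / 2) / (1 - exp (- (b / 2))))
      by (apply Rdiv_lt_0_compat; [apply Rmult_lt_0_compat; [lra | apply exp_pos] | lra]).
    unfold C1; lra. }
  set (C := exp (b / 2 * M) * C1).
  assert (HC : 0 < C) by (apply Rmult_lt_0_compat; [apply exp_pos | exact HC1]).
  destruct (small_alpha (b / 2) C d ltac:(lra) HC Hd) as [alpha0 [Ha0 Hsmall]].
  exists alpha0; split; [exact Ha0|]; intros alpha Ha1 Ha2.
  destruct (Hsmall alpha Ha1 Ha2) as [Hab Had].
  exists C; split; [exact HC|]; intros th Hk.
  destruct (Hth th Hk) as [Cv [Hvb [[m [[N [D [HD [HN ->]]]] Hm]] Hg]]].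
  set (c := cdens f1 f2 y th) in *.
  assert (HD0 := cdens_mass_pos f1 f2 y th D h1 h2 HD).
  assert (Hc : forall x, 0 <= c x) by (intro; left; apply cdens_pos; auto).
  assert (Cc := cdens_continuity f1 f2 y th h1 h2).
  destruct (displacement_exp_moment f1 f2 y Uf (v th) th D a b M h1 h2 (CU th) Cv Hvb HD
              Ha Hb (Htail th)) as [E [HE HEC]].
  assert (HND : N <= - d * D).
  { apply (Rmult_le_compat_r D) in Hm; [|lra].
    replace (N / D * D) with N in Hm by (field; lra); lra. }
  destruct (drift_bound c (v th) D N E (Rabs th) alpha (b / 2) C d Cc Cv Hc HD0 HD HN HND
              HE HEC (Rabs_pos th) Ha1 ltac:(lra) Hab HC Had) as [G [HG HGb]].
  exists (G / D); split; [|exact HGb].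
  exists G, D; split; [exact HD|]; split; [|reflexivity].
  apply (improper_ext (fun x => exp (alpha * Rabs (Rabs th + v th x)) * c x));
    [intro x; rewrite Hg; reflexivity | exact HG].
Qed.

Lemma sgn_mul_self th : th <> 0 -> sgn th * th = Rabs th.
Proof.
  intros H; unfold sgn; destruct (Rlt_dec 0 th); [rewrite Rabs_right by lra; ring|].
  destruct (Rlt_dec th 0); [rewrite Rabs_left by lra; ring | lra].
Qed.

Lemma Rabs_sgn_mul th x : th <> 0 -> Rabs (sgn th * x) = Rabs x.
Proof.
  intros H; rewrite Rabs_mult; unfold sgn; destruct (Rlt_dec 0 th); [rewrite Rabs_R1; ring|].
  destruct (Rlt_dec th 0); [rewrite (Rabs_left (-1)) by lra; ring | lra].
Qed.

Lemma DUR_drift f1 f2 y d k th :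
  sym_density f1 -> sym_density f2 -> 0 < k -> DUR f1 f2 y d k -> Rabs th > k ->
  exists m, cond_exp f1 f2 y (fun x => sgn th * (x - th)) th m /\ m <= - d.
Proof.
  intros h1 h2 Hk Hdur Hth.
  assert (Hth0 : th <> 0) by (intros ->; rewrite Rabs_R0 in Hth; lra).
  destruct (Hdur th Hth) as [m [Hm Hmb]].
  exists (sgn th * m + - (sgn th * th)); split.
  - apply (cond_exp_affine f1 f2 y (fun x => x)); [exact h1 | exact h2 | intro; ring | exact Hm].
  - rewrite sgn_mul_self by exact Hth0.
    assert (sgn th * m <= Rabs m) by (rewrite <- (Rabs_sgn_mul th m Hth0); apply Rle_abs).
    lra.
Qed.

Lemma PUR_drift f1 f2 y d k th :
  sym_density f1 -> sym_density f2 -> PUR f1 f2 y d k -> Rabs th > k ->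
  exists m, cond_exp f1 f2 y (fun x => sgn th * (y - x)) th m /\ m <= - d.
Proof.
  intros h1 h2 Hpur Hth.
  destruct (Hpur th Hth) as [m [Hm Hmb]].
  exists (- sgn th * m + 0); split.
  - apply (cond_exp_affine f1 f2 y (fun x => x - y)); [exact h1 | exact h2 | intro; ring | exact Hm].
  - lra.
Qed.

Theorem mainTheorem5 (f1 f2 : R -> R) (y : R)
  (hf1 : sym_density f1) (hf2 : sym_density f2) :
  (forall d k, 0 < d -> 0 < k ->
     DUR f1 f2 y d k -> GTIP f1 f2 y (fun theta x => x - theta) ->
     exists alpha0, 0 < alpha0 /\
       forall alpha, 0 < alpha -> alpha < alpha0 ->
         exists K, 0 < K /\
           forall theta, Rabs theta > k ->
             exists m, cond_exp f1 f2 y (fun x => exp (alpha * Rabs x)) theta m /\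
                       m <= exp (alpha * Rabs theta) * (1 - alpha * d / 2) + K) /\
  (forall d k, 0 < d -> 0 < k ->
     PUR f1 f2 y d k -> GTIP f1 f2 y (fun theta x => x) ->
     exists alpha0, 0 < alpha0 /\
       forall alpha, 0 < alpha -> alpha < alpha0 ->
         exists K, 0 < K /\
           forall theta, Rabs theta > k ->
             exists m, cond_exp f1 f2 y
                         (fun x => exp (alpha * Rabs (y - (x - theta)))) theta m /\
                       m <= exp (alpha * Rabs theta) * (1 - alpha * d / 2) + K).
Proof.
  split; intros d k Hd Hk Hrel Hgtip.
  - apply (uniform_drift_bound f1 f2 y _ (fun th x => sgn th * (x - th))
             (fun alpha th x => exp (alpha * Rabs x)) d k 0 hf1 hf2 Hgtip Hd (Rle_refl 0));
      [intros th x; reg | intros th Hth].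
    assert (Hth0 : th <> 0) by (intros ->; rewrite Rabs_R0 in Hth; lra).
    split; [intro x; reg|]; split; [intro x; rewrite Rabs_sgn_mul by exact Hth0; lra|].
    split; [exact (DUR_drift f1 f2 y d k th hf1 hf2 Hk Hrel Hth)|].
    intros alpha x; rewrite <- (sgn_mul_self th Hth0).
    replace (sgn th * th + sgn th * (x - th)) with (sgn th * x) by ring.
    rewrite Rabs_sgn_mul by exact Hth0; reflexivity.
  - apply (uniform_drift_bound f1 f2 y _ (fun th x => sgn th * (y - x))
             (fun alpha th x => exp (alpha * Rabs (y - (x - th)))) d k (Rabs y)
             hf1 hf2 Hgtip Hd (Rabs_pos y)); [intros th x; reg | intros th Hth].
    assert (Hth0 : th <> 0) by (intros ->; rewrite Rabs_R0 in Hth; lra).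
    split; [intro x; reg|]; split; [intro x; rewrite Rabs_sgn_mul by exact Hth0; split_Rabs; lra|].
    split; [exact (PUR_drift f1 f2 y d k th hf1 hf2 Hrel Hth)|].
    intros alpha x; rewrite <- (sgn_mul_self th Hth0).
    replace (sgn th * th + sgn th * (y - x)) with (sgn th * (y - (x - th))) by ring.
    rewrite Rabs_sgn_mul by exact Hth0; reflexivity.
Qed.
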